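(* Let $\mathcal{S}$ be an $F$-weighted boundary stratum and $U\subset A_\mathcal{S}$ a subtorus. Then $$\dim T_\mathcal{S}-\dim(U\cap T_\mathcal{S})=\dim_{\mathbb{Q}}\mathrm{ev}(\mathrm{Ann}(U)).$$ In particular, $\dim T_\mathcal{S}=\dim_{\mathbb{Q}}\mathrm{ev}(N(\mathcal{S}))$.
   Context: $F$ is a totally real number field of degree $g$ with trace pairing $\langle x,y\rangle=\mathrm{Tr}_{F/\mathbb{Q}}(xy)$. For a lattice $\mathcal{I}\subset F$, $\mathcal{I}^\vee=\{x:\langle x,y\rangle\in\mathbb{Z}\ \forall y\in\mathcal{I}\}$. An $\mathcal{I}$-weighted stable curve is a stable curve of arithmetic genus $g$ and geometric genus $0$ with an element of $\mathcal{I}$ attached to each branch at each node, such that branches at a node have opposite weights, weights on each component sum to zero, and the weights span $\mathcal{I}$. An $F$-weighted boundary stratum $\mathcal{S}$ is the moduli space of such weighted curves topologically equivalent (weight-preservingly) to a fixed one. $\mathrm{Sym}_{\mathbb{Q}}(F)\subset F\otimes_{\mathbb{Q}}F$ is the symmetric tensors, $\mathbf{S}_{\mathbb{Q}}(F)$ the quotient of $F\otimes_{\mathbb{Q}}F$ by the span of $x\otimes y-y\otimes x$ (and $\mathbf{S}_{\mathbb{Z}}(\mathcal{I}^\vee)$ similarly), dual via $\langle a\otimes b,c\otimes d\rangle=\langle a,c\rangle\langle b,d\rangle$. $N(\mathcal{S})\subset\mathbf{S}_{\mathbb{Q}}(F)$ is the annihilator of the span of $r\otimes r$ over the weights $r$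 of $\mathcal{S}$. $\Lambda^1=\{x\in F\otimes_{\mathbb{Q}}F:\lambda x=x\lambda\ \forall\lambda\in F\}\subset\mathrm{Sym}_{\mathbb{Q}}(F)$, with annihilator $\mathrm{Ann}(\Lambda^1)\subset\mathbf{S}_{\mathbb{Q}}(F)$. The ambient torus is $A_\mathcal{S}=\mathrm{Hom}_{\mathbb{Z}}(N(\mathcal{S})\cap\mathbf{S}_{\mathbb{Z}}(\mathcal{I}^\vee),\mathbb{G}_m)$, so its rational character space is $\chi(A_\mathcal{S})\otimes\mathbb{Q}=N(\mathcal{S})$; for a subtorus $U$, $\mathrm{Ann}(U)\subset N(\mathcal{S})$ is the subspace of rational characters trivial on $U$. The RM-torus $T_\mathcal{S}$ is the kernel of the restriction map $A_\mathcal{S}\to\mathrm{Hom}(N(\mathcal{S})\cap\mathrm{Ann}(\Lambda^1)\cap\mathbf{S}_{\mathbb{Z}}(\mathcal{I}^\vee),\mathbb{G}_m)$, so $\mathrm{Ann}(T_\mathcal{S})=N(\mathcal{S})\cap\mathrm{Ann}(\Lambda^1)$. The evaluation map is $\mathrm{ev}\colon\mathbf{S}_{\mathbb{Q}}(F)\to F$, $\mathrm{ev}(s\otimes t)=st$. *)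

From HB Require Import structures.
From mathcomp Require Import all_boot all_order all_algebra all_field.
Set Implicit Arguments. Unset Strict Implicit. Unset Printing Implicit Defensive.
Import Order.TTheory GRing.Theory Num.Theory.
Local Open Scope ring_scope.

Section RMDefs.
Variable F : fieldExtType rat.

Definition deg : nat := \dim {:F}.

Definition totally_real : Prop :=
  forall (f : {rmorphism F -> algC}) (x : F), f x \is Num.real.

(* a fixed Q-basis of F, used to identify F (x)_Q F with deg x deg matrices *)
Definition eb (i : 'I_deg) : F := tnth (vbasis {:F}) i.
Definition crd (i : 'I_deg) (x : F) : rat := coord (vbasis {:F}) i x.

(* trace Tr_{F/Q}: trace of multiplication by x *)
Definition trF (x : F) : rat := \sum_i crd i (x * eb i).
Definition tp (x y : F) : rat := trF (x * y).

(* F (x)_Q F, realised as matrices of coordinates in the basis eb *)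
Notation TT := 'M[rat]_(deg, deg).
Definition tens (a b : F) : TT := \matrix_(i, j) (crd i a * crd j b).

(* pairing <a(x)b, c(x)d> = <a,c><b,d> *)
Definition pairT (x y : TT) : rat :=
  \sum_i \sum_j \sum_k \sum_l x i j * y k l * (tp (eb i) (eb k) * tp (eb j) (eb l)).

Definition evT (x : TT) : F := \sum_i \sum_j x i j *: (eb i * eb j).
Definition evL : 'Hom(TT, F) := linfun evT.

Definition lmulT (l : F) (x : TT) : TT := \sum_i \sum_j x i j *: tens (l * eb i) (eb j).
Definition rmulT (l : F) (x : TT) : TT := \sum_i \sum_j x i j *: tens (eb i) (l * eb j).

Definition inLam1 (x : TT) : Prop := forall l : F, lmulT l x = rmulT l x.

(* Preimage in F(x)F of Ann(Lambda^1) in S_Q(F) *)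
Definition inAnnLam1 (m : TT) : Prop := forall x, inLam1 x -> pairT x m = 0.

Definition is_lattice_basis (b : deg.-tuple F) : Prop := basis_of {:F} b.
Definition inLat (b : deg.-tuple F) (x : F) : Prop :=
  exists c : 'I_deg -> int, x = \sum_i (c i)%:~R *: tnth b i.

(* Dual graph of a stable curve of geometric genus 0 with weights on branches:
   V = components (all rational), H = branches at nodes (half-edges),
   vert h = component containing branch h, opp h = other branch of the same node,
   w h = weight on branch h. *)
Record wgraph := WGraph {
  wV : finType;
  wH : finType;
  wvert : wH -> wV;
  wopp : wH -> wH;
  ww : wH -> F }.

Definition adj (G : wgraph) : rel (wV G) :=
  fun u v => [exists h, (wvert h == u) && (wvert (wopp h) == v)].

(* G is an I-weighted stable curve of arithmetic genus g = deg, geometric genus 0,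
   where I is the lattice with Z-basis b *)
Definition is_weighted_stable (b : deg.-tuple F) (G : wgraph) : Prop :=
  [/\
      (forall h : wH G, wopp (wopp h) = h) /\ (forall h : wH G, wopp h != h),
      (0 < #|wV G|)%N /\ (forall u v : wV G, connect (@adj G) u v),
      (* arithmetic genus = first Betti number of dual graph = g *)
      (#|wH G| %/ 2 + 1 = #|wV G| + deg)%N /\ ~~ odd #|wH G|,
      (* stability: each rational component has >= 3 special points *)
      (forall v : wV G, 3 <= #|[set h | wvert h == v]|)%N &
      [/\ forall h : wH G, inLat b (ww h),
          forall h : wH G, ww (wopp h) = - ww h,
          forall v : wV G, \sum_(h : wH G | wvert h == v) ww h = 0 &
          forall x, inLat b x ->
            exists c : wH G -> int, x = \sum_h (c h)%:~R *: ww h]].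

(* Preimage in F(x)F of N(S) in S_Q(F): annihilator of the r(x)r *)
Definition inNpre (G : wgraph) (m : TT) : Prop :=
  forall h : wH G, pairT (tens (ww h) (ww h)) m = 0.

(* Tori are encoded through their rational character spaces.  A subspace
   W of F(x)F containing the antisymmetric tensors and contained in the
   preimage Npre of N(S) represents the subspace W/A of N(S) = chi(A_S)(x)Q;
   the subtorus with annihilator W/A has dimension dim N(S) - dim (W/A)
   = dim Npre - dim W. *)
Definition subtorus_dim (Npre W : {vspace TT}) : int := (\dim Npre)%:Z - (\dim W)%:Z.

(* The annihilator of an intersection of subtori is the sum of annihilators. *)
Definition ann_cap (W1 W2 : {vspace TT}) : {vspace TT} := (W1 + W2)%VS.

(* Ann(T_S) = N(S) cap Ann(Lambda^1) *)
Definition annT (Npre AnnL : {vspace TT}) : {vspace TT} := (Npre :&: AnnL)%VS.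

End RMDefs.

From Pilot Require Import Defs.
From HB Require Import structures.
From mathcomp Require Import all_boot all_order all_algebra all_field.
From mathcomp Require Import ring zify.
Import Order.TTheory GRing.Theory Num.Theory.
Local Open Scope ring_scope.
Set Implicit Arguments. Unset Strict Implicit. Unset Printing Implicit Defensive.

(* Through the trace pairing, a tensor x ∈ F ⊗ F is the bilinear form
   (a, b) ↦ ⟨x, a ⊗ b⟩ on F.  For x ∈ Λ¹ this form only depends on ab, so
   ⟨x, m⟩ = ⟨x, 1 ⊗ ev m⟩ and ker ev ⊆ Ann(Λ¹).  Conversely, nondegeneracy of
   the trace form yields, for every z ∈ F, some x ∈ Λ¹ with form
   (a, b) ↦ Tr(z a b); if ev m ≠ 0, taking z = (ev m)⁻¹ gives ⟨x, m⟩ = Tr 1 = g.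
   Hence Ann(T_S) = N(S) ∩ ker ev, and the dimension formula is rank–nullity
   for ev restricted to Ann(U). *)

Section TracePairing.
Variable F : fieldExtType rat.
Local Notation d := (deg F).
Local Notation TT := 'M[rat]_(d, d).
Local Notation eb := (@eb F).
Local Notation crd := (@crd F).
Local Notation trF := (@trF F).
Local Notation tp := (@tp F).
Local Notation tens := (@tens F).
Local Notation pairT := (@pairT F).
Local Notation evT := (@evT F).

Lemma crd_eb i j : crd j (eb i) = (i == j)%:R.
Proof. by rewrite /crd /Defs.eb (tnth_nth 0) coord_free // (basis_free (vbasisP _)). Qed.

Lemma crd_expand x : x = \sum_i crd i x *: eb i.
Proof.
by rewrite {1}(coord_vbasis (memvf x)); apply: eq_bigr => i _; rewrite /Defs.eb (tnth_nth 0).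
Qed.

Lemma crd_is_scalar i : scalar (crd i).
Proof. by move=> c u v; rewrite /crd linearP. Qed.

Lemma scalar_expand (f : F -> rat) : scalar f -> forall a, f a = \sum_k crd k a * f (eb k).
Proof.
move=> fP a; pose fL : {scalar F} := HB.pack f (GRing.isLinear.Build _ _ _ _ f fP).
rewrite -[f a]/(fL a) {1}(crd_expand a) linear_sum.
by apply: eq_bigr => k _; rewrite linearZ.
Qed.

Lemma biscalar_eq_basis (f g : F -> F -> rat) :
  (forall a, scalar (f a)) -> (forall b, scalar (f^~ b)) ->
  (forall a, scalar (g a)) -> (forall b, scalar (g^~ b)) ->
  (forall k l, f (eb k) (eb l) = g (eb k) (eb l)) -> forall a b, f a b = g a b.
Proof.
move=> fr fl gr gl fg a b.
rewrite (scalar_expand (fl b) a) (scalar_expand (gl b) a); apply: eq_bigr => k _.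
rewrite (scalar_expand (fr _)) (scalar_expand (gr _)); congr (_ * _).
by apply: eq_bigr => l _; rewrite fg.
Qed.

Lemma trF_is_scalar : scalar trF.
Proof.
move=> c u v; rewrite /trF mulr_sumr -big_split; apply: eq_bigr => i _ /=.
by rewrite mulrDl -scalerAl crd_is_scalar.
Qed.
HB.instance Definition _ := GRing.isLinear.Build rat F rat _ trF trF_is_scalar.

Lemma tp_sym a b : tp a b = tp b a.
Proof. by rewrite /tp mulrC. Qed.

Lemma tp_mul l a b : tp (l * a) b = tp a (l * b).
Proof. by rewrite /tp mulrCA mulrA. Qed.

Lemma tp_is_scalar a : scalar (tp a).
Proof. by move=> c u v; rewrite /tp mulrDr -scalerAr linearP. Qed.
HB.instance Definition _ a := GRing.isLinear.Build rat F rat _ (tp a) (tp_is_scalar a).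

Lemma trF1_neq0 : trF 1 != 0.
Proof.
rewrite /trF (eq_bigr (fun _ => 1)) => [|i _]; last by rewrite mul1r crd_eb eqxx.
rewrite sumr_const card_ord pnatr_eq0 -lt0n lt0n dimv_eq0; apply/eqP => F0.
by have := memvf (1 : F); rewrite F0 memv0 oner_eq0.
Qed.

Lemma tp_nondeg a : (forall k, tp a (eb k) = 0) -> a = 0.
Proof.
move=> a_eb; apply: contraTeq trF1_neq0 => a_neq0.
rewrite -(mulfV a_neq0) -/(tp a a^-1) (scalar_expand (tp_is_scalar a)).
by rewrite big1 // => k _; rewrite a_eb mulr0.
Qed.

Definition gram : 'M[rat]_d := \matrix_(i, k) tp (eb i) (eb k).

Lemma gram_unit : gram \in unitmx.
Proof.
rewrite -row_free_unit; apply: inj_row_free => v v_gram.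
pose a := \sum_i v 0 i *: eb i.
have a0 : a = 0.
  apply: tp_nondeg => k; rewrite tp_sym linear_sum /=.
  transitivity ((v *m gram) 0 k); last by rewrite v_gram mxE.
  rewrite mxE.
  by apply: eq_bigr => i _; rewrite linearZ /= mxE tp_sym.
apply/rowP => i; rewrite mxE.
have /freeP/(_ (v 0)) := basis_free (vbasisP {:F}); apply.
rewrite -[RHS]a0; apply: eq_bigr => j _; by rewrite /Defs.eb (tnth_nth 0).
Qed.

Lemma tens_is_linear a : linear (tens a).
Proof. by move=> c u v; apply/matrixP => i j; rewrite !mxE crd_is_scalar; ring. Qed.
HB.instance Definition _ a := GRing.isLinear.Build rat F TT _ (tens a) (tens_is_linear a).

Lemma tens_linearl b : linear (tens^~ b).
Proof. by move=> c u v; apply/matrixP => i j; rewrite !mxE crd_is_scalar; ring. Qed.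

Lemma tens_eb k l : tens (eb k) (eb l) = delta_mx k l.
Proof. by apply/matrixP => i j; rewrite !mxE !crd_eb -natrM mulnb (eq_sym k) (eq_sym l). Qed.

Lemma pairT_sym x m : pairT x m = pairT m x.
Proof.
rewrite /pairT; under eq_bigr do rewrite exchange_big /=.
rewrite exchange_big; apply: eq_bigr => k _.
under eq_bigr do rewrite exchange_big /=.
rewrite exchange_big; apply: eq_bigr => l _.
apply: eq_bigr => i _; apply: eq_bigr => j _.
by rewrite (tp_sym (eb i)) (tp_sym (eb j)); ring.
Qed.

Lemma pairTE x m : pairT x m = \sum_k \sum_l m k l * (gram^T *m x *m gram) k l.
Proof.
rewrite pairT_sym /pairT; apply: eq_bigr => k _; apply: eq_bigr => l _.
rewrite mxE mulr_sumr exchange_big; apply: eq_bigr => j _.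
rewrite mxE big_distrl mulr_sumr; apply: eq_bigr => i _.
by rewrite !mxE (tp_sym (eb k)) (tp_sym (eb l)) /=; ring.
Qed.

Lemma pairT_is_scalar x : scalar (pairT x).
Proof.
move=> c m m'; rewrite !pairTE mulr_sumr -big_split; apply: eq_bigr => k _ /=.
by rewrite mulr_sumr -big_split; apply: eq_bigr => l _ /=; rewrite !mxE; ring.
Qed.
HB.instance Definition _ x := GRing.isLinear.Build rat TT rat _ (pairT x) (pairT_is_scalar x).

Lemma pairT_tens_eb x k l : pairT x (tens (eb k) (eb l)) = (gram^T *m x *m gram) k l.
Proof.
rewrite pairTE tens_eb (bigD1 k) //= [X in _ + X]big1 => [|i /negPf ik]; last first.
  by rewrite big1 // => j _; rewrite mxE ik mul0r.
rewrite addr0 (bigD1 l) //= [X in _ + X]big1 => [|j /negPf jl].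
  by rewrite addr0 mxE !eqxx mul1r.
by rewrite mxE jl andbF mul0r.
Qed.

Lemma pairT_tens_inj x y :
  (forall k l, pairT x (tens (eb k) (eb l)) = pairT y (tens (eb k) (eb l))) -> x = y.
Proof.
move=> xy; have gramT_unit : gram^T \in unitmx by rewrite unitmx_tr gram_unit.
apply: (can_inj (mulKmx gramT_unit)); apply: (can_inj (mulmxK gram_unit)).
by apply/matrixP => k l; rewrite -!pairT_tens_eb.
Qed.

Lemma pairT_tens_onto (Q : TT) : exists x, forall k l, pairT x (tens (eb k) (eb l)) = Q k l.
Proof.
have gramT_unit : gram^T \in unitmx by rewrite unitmx_tr gram_unit.
exists (invmx gram^T *m Q *m invmx gram) => k l.
by rewrite pairT_tens_eb !mulmxA mulmxV // mul1mx mulmxKV ?gram_unit.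
Qed.

Lemma pairT_tens_basis x (f : F -> F -> rat) :
  (forall a, scalar (f a)) -> (forall b, scalar (f^~ b)) ->
  (forall k l, pairT x (tens (eb k) (eb l)) = f (eb k) (eb l)) ->
  forall a b, pairT x (tens a b) = f a b.
Proof.
apply: (biscalar_eq_basis (f := fun a b => pairT x (tens a b))) => [a|b] c u v /=.
  by rewrite !linearP.
by rewrite tens_linearl linearP.
Qed.

Lemma pairT_tens a b c e : pairT (tens a b) (tens c e) = tp a c * tp b e.
Proof.
apply: (pairT_tens_basis (f := fun c e => tp a c * tp b e)) => [c' s u v|e' s u v|k l] /=.
- by rewrite linearP /=; ring.
- by rewrite linearP /=; ring.
rewrite pairT_tens_eb (tp_sym a) (tp_sym b).
rewrite (scalar_expand (tp_is_scalar (eb k)) a) (scalar_expand (tp_is_scalar (eb l)) b).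
rewrite mxE big_distrr /=; apply: eq_bigr => j _.
rewrite mxE !big_distrl /=; apply: eq_bigr => i _.
by rewrite !mxE (tp_sym (eb k)) (tp_sym (eb l)); ring.
Qed.

Lemma pairT_lmulT l x a b : pairT (lmulT l x) (tens a b) = pairT x (tens (l * a) b).
Proof.
rewrite pairT_sym [in RHS]pairT_sym [in RHS](matrix_sum_delta x) /lmulT.
rewrite !linear_sum; apply: eq_bigr => i _; rewrite !linear_sum; apply: eq_bigr => j _.
by rewrite !linearZ /= -tens_eb !pairT_tens tp_mul.
Qed.

Lemma pairT_rmulT l x a b : pairT (rmulT l x) (tens a b) = pairT x (tens a (l * b)).
Proof.
rewrite pairT_sym [in RHS]pairT_sym [in RHS](matrix_sum_delta x) /rmulT.
rewrite !linear_sum; apply: eq_bigr => i _; rewrite !linear_sum; apply: eq_bigr => j _.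
by rewrite !linearZ /= -tens_eb !pairT_tens tp_mul.
Qed.

Lemma lam1_tens x a b : inLam1 x -> pairT x (tens a b) = pairT x (tens 1 (a * b)).
Proof. by move=> xL; rewrite -{1}[a]mulr1 -pairT_lmulT xL pairT_rmulT. Qed.

Lemma lam1_pairT_evT x m : inLam1 x -> pairT x m = pairT x (tens 1 (evT m)).
Proof.
move=> xL; rewrite {1}(matrix_sum_delta m) /Defs.evT.
rewrite !linear_sum; apply: eq_bigr => i _; rewrite !linear_sum; apply: eq_bigr => j _.
by rewrite !linearZ /= -tens_eb lam1_tens.
Qed.

Lemma inAnnLam1_evT m : inAnnLam1 m <-> evT m = 0.
Proof.
split=> [mA | m0 x /lam1_pairT_evT ->]; last by rewrite m0 !linear0.
have [//|m_neq0] := eqVneq (evT m) 0; case/eqP: trF1_neq0.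
pose z := (evT m)^-1.
have [x xE] := pairT_tens_onto (\matrix_(k, l) tp z (eb k * eb l)).
have x_tp a b : pairT x (tens a b) = tp z (a * b).
  apply: (pairT_tens_basis (f := fun a b => tp z (a * b))) => [a' c u v|b' c u v|k l] /=.
  - by rewrite mulrDr -scalerAr linearP.
  - by rewrite mulrDl -scalerAl linearP.
  by rewrite xE mxE.
have xL : inLam1 x.
  move=> l; apply: pairT_tens_inj => k j.
  by rewrite pairT_lmulT pairT_rmulT !x_tp [l * _]mulrC mulrA.
by have := mA x xL; rewrite lam1_pairT_evT // x_tp mul1r /tp mulVf.
Qed.

Lemma evT_is_linear : linear evT.
Proof.
move=> c x y; rewrite /Defs.evT scaler_sumr -big_split; apply: eq_bigr => i _ /=.
by rewrite scaler_sumr -big_split; apply: eq_bigr => j _ /=; rewrite !mxE scalerDl scalerA.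
Qed.
HB.instance Definition _ := GRing.isLinear.Build rat TT F _ evT evT_is_linear.

Lemma annLam1_lker (AnnL : {vspace TT}) :
  (forall m, m \in AnnL <-> inAnnLam1 m) -> AnnL = lker (evL F).
Proof.
move=> AnnLE; apply/vspaceP => m; rewrite memv_ker lfunE /=.
by apply/idP/eqP => [/AnnLE/inAnnLam1_evT | /inAnnLam1_evT/AnnLE].
Qed.

End TracePairing.

Lemma dimv_add_capker (K : fieldType) (vT wT : vectType K) (f : 'Hom(vT, wT))
    (U W : {vspace vT}) :
  (W <= U)%VS -> \dim (W + (U :&: lker f)) = (\dim (f @: W) + \dim (U :&: lker f))%N.
Proof.
move=> sWU; have := dimv_sum_cap W (U :&: lker f).
rewrite capvA (capv_idPl sWU); have := limg_ker_dim f W; lia.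
Qed.

Theorem proposition3p7 (F : fieldExtType rat) (b : (deg F).-tuple F)
  (G : wgraph F)
  (Npre AnnL : {vspace 'M[rat]_(deg F, deg F)}) :
  totally_real F ->
  is_lattice_basis b ->
  is_weighted_stable b G ->
  (forall m, m \in Npre <-> inNpre G m) ->
  (forall m, m \in AnnL <-> inAnnLam1 m) ->
  (forall W : {vspace 'M[rat]_(deg F, deg F)},
     (forall x y : F, tens x y - tens y x \in W) ->
     (W <= Npre)%VS ->
     subtorus_dim Npre (annT Npre AnnL)
       - subtorus_dim Npre (ann_cap W (annT Npre AnnL))
     = (\dim (evL F @: W))%:Z)
  /\ subtorus_dim Npre (annT Npre AnnL) = (\dim (evL F @: Npre))%:Z.
Proof.
move=> _ _ _ _ /annLam1_lker ->; rewrite /subtorus_dim /annT /ann_cap.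
split=> [W _ sWN | ]; first by rewrite dimv_add_capker // PoszD; ring.
by rewrite -(limg_ker_dim (evL F) Npre) PoszD; ring.
Qed.
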